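(* Let $L$ be a finite-dimensional Lie algebra over a field $F$, let $M$ be a maximal subalgebra of $L$, and let $C$ and $D$ be ideal completions of $M$ in $L$. Then $C/k(C)\cong D/k(D)$.
   Context: For a nonzero subalgebra $B$ of $L$, the strict core $k(B)$ is the sum of all ideals of $L$ that are proper subalgebras of $B$ (it is $0$ if there are none). A subalgebra $C$ of $L$ is a completion of $M$ if $C\not\subseteq M$ but every proper subalgebra of $C$ that is an ideal of $L$ is contained in $M$. An ideal completion of $M$ is a completion of $M$ which is an ideal of $L$; for such $C$, $k(C)$ is an ideal of $L$ contained in $C$, so $C/k(C)$ is a Lie algebra. *)

From HB Require Import structures.
From mathcomp Require Import all_boot all_order all_algebra.
Set Implicit Arguments. Unset Strict Implicit. Unset Printing Implicit Defensive.
Import GRing.Theory.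
Local Open Scope ring_scope.


Section Lie.
Variables (F : fieldType) (L : vectType F) (br : L -> L -> L).

Definition is_lie_bracket : Prop :=
  [/\ (forall (a : F) (x y z : L), br (a *: x + y) z = a *: br x z + br y z),
      (forall (a : F) (x y z : L), br x (a *: y + z) = a *: br x y + br x z),
      (forall x : L, br x x = 0) &
      (forall x y z : L, br x (br y z) + br y (br z x) + br z (br x y) = 0)].

Definition is_subalgebra (U : {vspace L}) : Prop :=
  forall x y, x \in U -> y \in U -> br x y \in U.

Definition is_ideal (I : {vspace L}) : Prop :=
  forall x y, y \in I -> br x y \in I.

Definition is_maximal_subalgebra (M : {vspace L}) : Prop :=
  [/\ is_subalgebra M, M != fullv &
      forall U : {vspace L}, is_subalgebra U -> (M <= U)%VS ->
        U = M \/ U = fullv].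

(* membership in the strict core k(B): the sum of all ideals of L that are
   proper subalgebras of B (0 if there are none).  x lies in this sum iff
   x lies in a finite sum of such ideals. *)
Definition in_strict_core (B : {vspace L}) (x : L) : Prop :=
  exists s : seq {vspace L},
    (forall I, I \in s -> is_ideal I /\ (I <= B)%VS /\ I != B) /\
    x \in (\sum_(I <- s) I)%VS.

Definition is_completion (M C : {vspace L}) : Prop :=
  [/\ is_subalgebra C, ~~ (C <= M)%VS &
      forall I : {vspace L}, is_ideal I -> (I <= C)%VS -> I != C -> (I <= M)%VS].

Definition is_ideal_completion (M C : {vspace L}) : Prop :=
  is_completion M C /\ is_ideal C.

(* C/k(C) is isomorphic (as Lie algebras) to D/k(D): there is a linear map
   f mapping C into D which induces a bijective Lie homomorphism
   C/k(C) -> D/k(D), i.e. a surjective Lie homomorphism C -> D/k(D)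
   whose kernel is exactly k(C). *)
Definition quotients_isomorphic (C D : {vspace L}) : Prop :=
  exists f : 'End(L),
    [/\ (forall x, x \in C -> f x \in D),
        (forall d, d \in D -> exists2 c, c \in C & in_strict_core D (d - f c)),
        (forall x, x \in C -> (in_strict_core D (f x) <-> in_strict_core C x)) &
        (forall x y, x \in C -> y \in C ->
           in_strict_core D (f (br x y) - br (f x) (f y)))].

End Lie.

(* If C = D there is nothing to prove.  Otherwise L = M + C = M + D, since
   M + C is a subalgebra properly containing M.  The ideal C ∩ D is proper in
   C, hence lies in M; consequently M ∩ D is an ideal of L (brackets with C
   land in C ∩ D), and it is the largest ideal of L properly inside D, so
   k(D) = M ∩ D and likewise k(C) = M ∩ C.  Sending x to minus its
   D-component f x in L = M + D gives an element of D congruent to -x modulo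
   M, hence C/(M ∩ C) ≅ L/M ≅ D/(M ∩ D) as vector spaces; the brackets match
   because the cross terms [x, f y] and [f x, y] lie in C ∩ D ⊆ M. *)
From HB Require Import structures.
From Stdlib Require Import Setoid.
From mathcomp Require Import all_boot all_order all_algebra.
Set Implicit Arguments. Unset Strict Implicit. Unset Printing Implicit Defensive.
Import GRing.Theory.
Local Open Scope ring_scope.

Section LieIdeals.
Variables (F : fieldType) (L : vectType F) (br : L -> L -> L).
Hypothesis br_lie : is_lie_bracket br.

Lemma brDl x y z : br (x + y) z = br x z + br y z.
Proof. by case: br_lie => brZDl _ _ _; rewrite -[x]scale1r brZDl !scale1r. Qed.

Lemma brDr x y z : br x (y + z) = br x y + br x z.
Proof. by case: br_lie => _ brZDr _ _; rewrite -[y]scale1r brZDr !scale1r. Qed.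

Lemma brC x y : br x y = - br y x.
Proof.
case: br_lie => _ _ brxx _; apply/eqP; rewrite -addr_eq0.
by have := brxx (x + y); rewrite brDl !brDr !brxx add0r addr0 => ->.
Qed.

Lemma ideal_brl (I : {vspace L}) x y : is_ideal br I -> y \in I -> br y x \in I.
Proof. by move=> I_ideal yI; rewrite brC rpredN I_ideal. Qed.

Lemma capv_ideal (I J : {vspace L}) :
  is_ideal br I -> is_ideal br J -> is_ideal br (I :&: J).
Proof.
by move=> I_ideal J_ideal x y /memv_capP[yI yJ]; rewrite memv_cap I_ideal ?J_ideal.
Qed.

Lemma addv_subalgebra (S I : {vspace L}) :
  is_subalgebra br S -> is_ideal br I -> is_subalgebra br (S + I).
Proof.
move=> S_sub I_ideal u v.
move=> /memv_addP[s1 s1S [i1 i1I ->]] /memv_addP[s2 s2S [i2 i2I ->]].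
rewrite !brDl !brDr -addrA rpredD //.
  exact: subvP (addvSl S I) _ (S_sub _ _ s1S s2S).
apply: subvP (addvSr S I) _ _.
apply: rpredD; first exact: I_ideal.
by apply: rpredD; [apply: ideal_brl | apply: I_ideal].
Qed.

Lemma strict_core0 (B : {vspace L}) : in_strict_core br B 0.
Proof. by exists [::]; rewrite mem0v. Qed.

Lemma strict_core_ideal (B I : {vspace L}) x :
  is_ideal br I -> (I <= B)%VS -> I != B -> x \in I -> in_strict_core br B x.
Proof.
move=> I_ideal sIB neIB xI; exists [:: I]; rewrite big_seq1; split=> // J.
by rewrite inE => /eqP ->.
Qed.

Lemma strict_core_completion (M C : {vspace L}) x :
  is_completion br M C -> in_strict_core br C x -> x \in M.
Proof.
case=> _ _ C_compl [s [s_ideals xs]]; apply: subvP xs.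
elim: s s_ideals => [|I s IHs] s_ideals; first by rewrite big_nil sub0v.
have [I_ideal [sIC neIC]] := s_ideals I (mem_head I s).
rewrite big_cons subv_add C_compl // IHs // => J Js.
by apply: s_ideals; rewrite inE Js orbT.
Qed.

Lemma quotients_isomorphic_refl (C : {vspace L}) : quotients_isomorphic br C C.
Proof.
exists \1%VF; split=> [x|d dC|x _|x y _ _]; rewrite ?lfunE //.
- by exists d; rewrite // lfunE subrr; apply: strict_core0.
- by rewrite subrr; apply: strict_core0.
Qed.

Section IdealCompletions.
Variable M : {vspace L}.
Hypothesis M_max : is_maximal_subalgebra br M.

Lemma addv_completion_full (C : {vspace L}) :
  is_ideal_completion br M C -> (M + C)%VS = fullv.
Proof.
case: M_max => M_sub _ M_maxP [[_ nsCM _] C_ideal].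
case: (M_maxP _ (addv_subalgebra M_sub C_ideal) (addvSl M C)) => // eqMC.
by move: nsCM; rewrite -eqMC addvSr.
Qed.

Lemma capv_completions_sub (C D : {vspace L}) :
  is_ideal_completion br M C -> is_ideal_completion br M D -> C != D ->
  (C :&: D <= M)%VS.
Proof.
move=> [[_ nsCM C_compl] C_ideal] [[_ _ D_compl] D_ideal] neCD.
apply: C_compl; [exact: capv_ideal | exact: capvSl |].
apply: contraNneq nsCM => eqCD.
by apply: D_compl C_ideal _ neCD; rewrite -eqCD capvSr.
Qed.

Lemma capv_max_ideal (C D : {vspace L}) :
  is_ideal_completion br M C -> is_ideal_completion br M D -> C != D ->
  is_ideal br (M :&: D).
Proof.
move=> C_icomp D_icomp neCD x y /memv_capP[yM yD].
have [[M_sub _ _] [_ C_ideal] [_ D_ideal]] := And3 M_max C_icomp D_icomp.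
have /memv_addP[m mM [c cC ->]] : x \in (M + C)%VS.
  by rewrite addv_completion_full ?memvf.
have cyCD : br c y \in (C :&: D)%VS by rewrite memv_cap D_ideal ?ideal_brl.
rewrite brDl; apply: rpredD; first by rewrite memv_cap M_sub ?D_ideal.
have sCDM := capv_completions_sub C_icomp D_icomp neCD.
by rewrite memv_cap (subvP sCDM _ cyCD) D_ideal.
Qed.

Lemma strict_coreE (C D : {vspace L}) x :
  is_ideal_completion br M C -> is_ideal_completion br M D -> C != D ->
  x \in D -> in_strict_core br D x <-> x \in M.
Proof.
move=> C_icomp D_icomp neCD xD; split; first exact: strict_core_completion D_icomp.1.
move=> xM; apply: strict_core_ideal (capvSr M D) _ _.
- exact: capv_max_ideal C_icomp D_icomp neCD.
- by case: D_icomp => -[_ nsDM _] _; apply: contraNneq nsDM => <-; rewrite capvSl.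
- by rewrite memv_cap xM.
Qed.

(* The sign matters: [x + f x, y + f y] lies in M, so modulo M we get
   [f x, f y] = -[x, y] = f [x, y]; the D-component itself is off by a sign. *)
Definition negproj (D : {vspace L}) : 'End(L) := - addv_pi2 M D.

Lemma memv_negproj D x : negproj D x \in D.
Proof. by rewrite opp_lfunE rpredN memv_pi2. Qed.

Lemma memv_addr_negproj D x : is_ideal_completion br M D -> x + negproj D x \in M.
Proof.
move=> D_icomp.
have xMD : x \in (M + D)%VS by rewrite addv_completion_full ?memvf.
by rewrite opp_lfunE -{1}(addv_pi1_pi2 xMD) addrK memv_pi1.
Qed.

Lemma memv_negprojM D x : is_ideal_completion br M D ->
  (negproj D x \in M) = (x \in M).
Proof.
move=> D_icomp.
by rewrite -[negproj D x](addKr x) rpredDr ?rpredN ?memv_addr_negproj.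
Qed.

Lemma negproj_br (C D : {vspace L}) x y :
  is_ideal_completion br M C -> is_ideal_completion br M D -> C != D ->
  x \in C -> y \in C ->
  negproj D (br x y) - br (negproj D x) (negproj D y) \in M.
Proof.
move=> C_icomp D_icomp neCD xC yC.
have [[M_sub _ _] [_ C_ideal] [_ D_ideal]] := And3 M_max C_icomp D_icomp.
set f := negproj D; set b := br x y.
have inCD z : z \in C -> z \in D -> z \in M.
  move=> zC zD; apply: subvP (capv_completions_sub C_icomp D_icomp neCD) _ _.
  by rewrite memv_cap zC.
have cross : br x (f y) + br (f x) y \in M.
  apply: rpredD; apply: inCD.
  - exact: ideal_brl.
  - exact/D_ideal/memv_negproj.
  - exact: C_ideal.
  - exact/ideal_brl/memv_negproj.
have expand :
    br (x + f x) (y + f y) = b + br (f x) (f y) + (br x (f y) + br (f x) y).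
  by rewrite brDl !brDr -!addrA [br (f x) (f y) + _]addrC -addrA.
have -> : f b - br (f x) (f y) = (b + f b) - (b + br (f x) (f y)).
  by rewrite opprD addrACA subrr add0r.
apply: rpredB; first exact: memv_addr_negproj.
by rewrite -(rpredDr _ cross) -expand M_sub ?memv_addr_negproj.
Qed.

End IdealCompletions.
End LieIdeals.

Theorem theorem2p1 (F : fieldType) (L : vectType F) (br : L -> L -> L)
  (M C D : {vspace L}) :
  is_lie_bracket br ->
  is_maximal_subalgebra br M ->
  is_ideal_completion br M C ->
  is_ideal_completion br M D ->
  quotients_isomorphic br C D.
Proof.
move=> br_lie M_max C_icomp D_icomp.
have [<-|neCD] := eqVneq C D; first exact: quotients_isomorphic_refl.
have coreD := strict_coreE br_lie M_max C_icomp D_icomp neCD.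
have neDC : D != C by rewrite eq_sym.
have coreC := strict_coreE br_lie M_max D_icomp C_icomp neDC.
exists (negproj M D); split=> [x _ | d dD | x xC | x y xC yC].
- exact: memv_negproj.
- have /memv_addP[m mM [c cC defd]] : d \in (M + C)%VS.
    by rewrite (addv_completion_full br_lie M_max C_icomp) memvf.
  exists (- c); rewrite ?rpredN // coreD; last by rewrite rpredB ?memv_negproj.
  rewrite linearN opprK defd -addrA; apply: rpredD mM _.
  exact: (memv_addr_negproj br_lie M_max c D_icomp).
- rewrite coreD ?memv_negproj // coreC //.
  by rewrite (memv_negprojM br_lie M_max x D_icomp).
- rewrite coreD; first exact: (negproj_br br_lie M_max C_icomp D_icomp neCD xC yC).
  by rewrite rpredB ?memv_negproj // (proj2 D_icomp) ?memv_negproj.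
Qed.
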